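(* \[ \sum_{n=0}^\infty\frac{p(n)\,(-2^{24})^n}{(2n+1)^5(6n+1)^5(6n+5)^5\binom{6n}{3n}^5}=\frac{189}{2}\zeta(3), \] where \[ p(n)=491287680n^{12}+3517115904n^{11}+11399133888n^{10}+22100247360n^9+28522562400n^8+25791650640n^7 \] \[ +16738310448n^6+7846312104n^5+2633313600n^4+616193160n^3+95283770n^2+8729374n+357931. \]
   Context: $\zeta$ is the Riemann zeta function. *)

From Stdlib Require Import Reals.
From Coquelicot Require Import Coquelicot.
Open Scope R_scope.

Definition zeta3 : R := Series (fun k : nat => / (INR k + 1) ^ 3).

Definition p18 (n : R) : R :=
  491287680 * n ^ 12 + 3517115904 * n ^ 11 + 11399133888 * n ^ 10
  + 22100247360 * n ^ 9 + 28522562400 * n ^ 8 + 25791650640 * n ^ 7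
  + 16738310448 * n ^ 6 + 7846312104 * n ^ 5 + 2633313600 * n ^ 4
  + 616193160 * n ^ 3 + 95283770 * n ^ 2 + 8729374 * n + 357931.

Definition term18 (n : nat) : R :=
  p18 (INR n) * (- 2 ^ 24) ^ n /
  ((2 * INR n + 1) ^ 5 * (6 * INR n + 1) ^ 5 * (6 * INR n + 5) ^ 5
   * (Binomial.C (6 * n)%nat (3 * n)%nat) ^ 5).

From Stdlib Require Import Reals Lra Lia List.
From Coquelicot Require Import Coquelicot.
Import ListNotations.
Open Scope R_scope.

(* WZ method.  Write [odd_prod m k] for (2k+1)(2k+3)...(2k+2m+1) and let
   W(n,k) = (2k+3n+1) / odd_prod(3n,k)^4, so that Sum_k W(0,k) = Sum_k 1/(2k+1)^3
   = (7/8) zeta(3).  With a rational ratio r(n), the weight c(n) = r(0)...r(n-1)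
   and a rational certificate G = W * R(n,k), the functions F(n,k) = c(n) W(n,k)
   and c(n) G(n,k) form a WZ pair: F(n,k) - F(n+1,k) = c(n) (G(n,k+1) - G(n,k)).
   Summing over k, consecutive row sums of F differ by -c(n) G(n,0), which is the
   n-th term of the series divided by 108.  The row sums are O(2^-n), so the series
   telescopes to 108 Sum_k F(0,k) = 108 (7/8) zeta(3) = (189/2) zeta(3). *)

Lemma sum_n_succ (a : nat -> R) (N : nat) :
  @eq R (sum_n a (S N)) (sum_n a N + a (S N)).
Proof. now rewrite sum_Sn. Qed.

Lemma sum_n_telescope (f : nat -> R) (N : nat) :
  @eq R (sum_n (fun n => f n - f (S n)) N) (f O - f (S N)).
Proof.
  induction N as [|N IH].
  - now rewrite sum_O.
  - rewrite sum_n_succ, IH. ring.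
Qed.

Lemma is_series_telescope (f : nat -> R) (l : R) :
  is_lim_seq f l -> is_series (fun n => f n - f (S n)) (f O - l).
Proof.
  intros Hf.
  enough (H : is_lim_seq (sum_n (fun n => f n - f (S n))) (f O - l)) by exact H.
  apply (is_lim_seq_ext (fun N => f O - f (S N))).
  - intros N. now rewrite sum_n_telescope.
  - apply is_lim_seq_minus'; [apply is_lim_seq_const|].
    now apply (is_lim_seq_incr_1 f).
Qed.

Lemma is_lim_seq_Rabs_le_0 (u v : nat -> R) :
  (forall n, Rabs (u n) <= v n) -> is_lim_seq v 0 -> is_lim_seq u 0.
Proof.
  intros Huv Hv. apply is_lim_seq_abs_0.
  apply (is_lim_seq_le_le (fun _ => 0) _ v); [|apply is_lim_seq_const|exact Hv].
  intros n. split; [apply Rabs_pos|apply Huv].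
Qed.

Lemma ex_series_Rabs_le (a b : nat -> R) :
  (forall n, Rabs (a n) <= b n) -> ex_series b -> ex_series a.
Proof. apply (@ex_series_le R_AbsRing R_CompleteNormedModule). Qed.

Lemma Rabs_Series_le (a b : nat -> R) :
  (forall n, Rabs (a n) <= b n) -> ex_series b -> Rabs (Series a) <= Series b.
Proof.
  intros Hab Hb. eapply Rle_trans.
  - apply Series_Rabs, (ex_series_Rabs_le _ b); [|exact Hb].
    intros n. rewrite Rabs_Rabsolu. apply Hab.
  - apply Series_le; [|exact Hb].
    intros n. split; [apply Rabs_pos|apply Hab].
Qed.

Lemma is_lim_seq_inv_succ : is_lim_seq (fun n => / (INR n + 1)) 0.
Proof.
  replace (Finite 0) with (Rbar_inv p_infty) by reflexivity.
  apply is_lim_seq_inv; [|discriminate].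
  apply (is_lim_seq_ext (fun n => INR (S n))); [intros n; apply S_INR|].
  apply (is_lim_seq_incr_1 INR), is_lim_seq_INR.
Qed.

Section WZ_summation.

Variables F G : nat -> nat -> R.
Hypothesis wz_pair : forall n k, F n k - F (S n) k = G n (S k) - G n k.
Hypothesis row_summable : forall n, ex_series (F n).
Hypothesis G_vanishes : forall n, is_lim_seq (G n) 0.
Hypothesis row_sums_vanish : is_lim_seq (fun n => Series (F n)) 0.

Lemma row_sum_sub n : Series (F n) - Series (F (S n)) = - G n O.
Proof.
  assert (Hdiff : is_series (fun k => F n k - F (S n) k) (- G n O)).
  { apply (is_series_ext (fun k => - G n k - - G n (S k))).
    { intros k. rewrite wz_pair. change (- G n k - - G n (S k) = G n (S k) - G n k). ring. }
    replace (- G n O) with (- G n O - - 0) by ring.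
    apply is_series_telescope.
    replace (Finite (- 0)) with (Rbar_opp 0) by (simpl; f_equal; ring).
    apply -> is_lim_seq_opp. apply G_vanishes. }
  rewrite <- (is_series_unique _ _ Hdiff). symmetry.
  apply is_series_unique, (@is_series_minus R_AbsRing R_NormedModule);
    apply Series_correct, row_summable.
Qed.

Lemma is_series_wz : is_series (fun n => - G n O) (Series (F O)).
Proof.
  rewrite <- (Rminus_0_r (Series (F O))).
  apply (is_series_ext (fun n => Series (F n) - Series (F (S n)))).
  - exact row_sum_sub.
  - now apply is_series_telescope.
Qed.

End WZ_summation.

Lemma ex_series_inv_pow (s : nat) :
  (2 <= s)%nat -> ex_series (fun k => / (INR k + 1) ^ s).
Proof.
  intros Hs.
  apply (ex_series_Rabs_le _ (fun k => 2 * (/ (INR k + 1) - / (INR (S k) + 1)))).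
  - intros k. pose proof (pos_INR k) as Hk. rewrite S_INR.
    assert (Hpow : (INR k + 1) ^ 2 <= (INR k + 1) ^ s) by (apply Rle_pow; [lra|exact Hs]).
    rewrite Rabs_right by (apply Rle_ge, Rlt_le, Rinv_0_lt_compat, pow_lt; lra).
    apply Rle_trans with (/ (INR k + 1) ^ 2).
    + apply Rinv_le_contravar; [apply pow_lt; lra|exact Hpow].
    + replace (2 * (/ (INR k + 1) - / (INR k + 1 + 1)))
        with (/ (INR k + 1) * / ((INR k + 1 + 1) / 2)) by (field; lra).
      replace (/ (INR k + 1) ^ 2) with (/ (INR k + 1) * / (INR k + 1)) by (field; lra).
      apply Rmult_le_compat_l; [apply Rlt_le, Rinv_0_lt_compat; lra|].
      apply Rinv_le_contravar; lra.
  - exists (2 * (/ (INR O + 1) - 0)).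
    apply (is_series_ext (fun k => scal 2 (/ (INR k + 1) - / (INR (S k) + 1)))).
    { reflexivity. }
    apply (@is_series_scal_l R_AbsRing R_NormedModule).
    apply is_series_telescope, is_lim_seq_inv_succ.
Qed.

Lemma sum_n_inv_pow_odd_even (s K : nat) :
  @eq R (sum_n (fun k => / (INR k + 1) ^ s) (2 * K + 1))
    (sum_n (fun k => / (2 * INR k + 1) ^ s) K
     + / 2 ^ s * sum_n (fun k => / (INR k + 1) ^ s) K).
Proof.
  induction K as [|K IH].
  - change (2 * 0 + 1)%nat with 1%nat. rewrite sum_n_succ, !sum_O. simpl.
    replace (1 + 1) with 2 by ring. rewrite Rmult_0_r, Rplus_0_l, pow1, Rinv_1. ring.
  - replace (2 * S K + 1)%nat with (S (S (2 * K + 1))) by lia.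
    rewrite !sum_n_succ, IH.
    replace (INR (S (S (2 * K + 1))) + 1) with (2 * (INR (S K) + 1))
      by (rewrite !S_INR, plus_INR, mult_INR; simpl; ring).
    replace (INR (S (2 * K + 1)) + 1) with (2 * INR (S K) + 1)
      by (rewrite !S_INR, plus_INR, mult_INR; simpl; ring).
    rewrite Rpow_mult_distr, Rinv_mult. ring.
Qed.

Lemma is_series_inv_odd_pow (s : nat) : (2 <= s)%nat ->
  is_series (fun k => / (2 * INR k + 1) ^ s)
    ((1 - / 2 ^ s) * Series (fun k => / (INR k + 1) ^ s)).
Proof.
  intros Hs.
  set (z := fun k => / (INR k + 1) ^ s).
  assert (Hz : is_lim_seq (sum_n z) (Series z))
    by exact (Series_correct _ (ex_series_inv_pow s Hs)).
  enough (H : is_lim_seq (sum_n (fun k => / (2 * INR k + 1) ^ s))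
                ((1 - / 2 ^ s) * Series z)) by exact H.
  apply (is_lim_seq_ext (fun K => sum_n z (2 * K + 1) - / 2 ^ s * sum_n z K)).
  { intros K. unfold z. rewrite sum_n_inv_pow_odd_even. ring. }
  replace ((1 - / 2 ^ s) * Series z) with (Series z - / 2 ^ s * Series z) by ring.
  apply is_lim_seq_minus'.
  - apply (is_lim_seq_subseq _ _ (fun K => 2 * K + 1)%nat); [|exact Hz].
    apply eventually_subseq. intros; lia.
  - apply (is_lim_seq_scal_l _ _ (Series z)), Hz.
Qed.

Definition horner (l : list R) (x : R) : R :=
  fold_right (fun a acc => a + x * acc) 0 l.

Lemma horner_Rabs_1_nonneg (l : list R) : 0 <= horner (map Rabs l) 1.
Proof.
  induction l as [|a l IH]; simpl; [lra|]. pose proof (Rabs_pos a). lra.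
Qed.

Lemma Rabs_horner_le (l : list R) (x : R) : 0 <= x ->
  Rabs (horner l x) <= horner (map Rabs l) 1 * (x + 1) ^ length l.
Proof.
  intros Hx. induction l as [|a l IH]; simpl.
  - rewrite Rabs_R0. lra.
  - pose proof (horner_Rabs_1_nonneg l) as HM.
    pose proof (Rabs_pos a) as Ha.
    assert (Hp : 1 <= (x + 1) ^ length l) by (apply pow_R1_Rle; lra).
    eapply Rle_trans; [apply Rabs_triang|].
    rewrite Rabs_mult, (Rabs_right x) by lra.
    assert (x * Rabs (horner l x) <= x * (horner (map Rabs l) 1 * (x + 1) ^ length l))
      by (apply Rmult_le_compat_l; lra).
    assert (Rabs a <= Rabs a * ((x + 1) * (x + 1) ^ length l))
      by (rewrite <- (Rmult_1_r (Rabs a)) at 1; apply Rmult_le_compat_l; nra).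
    nra.
Qed.

Fixpoint odd_prod (m k : nat) : R :=
  match m with
  | O => 2 * INR k + 1
  | S m' => odd_prod m' k * (2 * INR k + 2 * INR m' + 3)
  end.

Lemma odd_prod_pos (m k : nat) : 0 < odd_prod m k.
Proof.
  pose proof (pos_INR k).
  induction m as [|m IH]; simpl; [lra|].
  pose proof (pos_INR m). apply Rmult_lt_0_compat; lra.
Qed.

Lemma odd_prod_ge_pow (m k : nat) : (2 * INR k + 1) ^ S m <= odd_prod m k.
Proof.
  pose proof (pos_INR k).
  induction m as [|m IH]; simpl in *; [lra|].
  pose proof (pos_INR m).
  assert (0 <= (2 * INR k + 1) ^ m) by (apply pow_le; lra).
  rewrite Rmult_comm. apply Rmult_le_compat; nra.
Qed.

Lemma odd_prod_0_le (m k : nat) : odd_prod m 0 * (2 * INR k + 1) <= odd_prod m k.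
Proof.
  pose proof (pos_INR k).
  induction m as [|m IH]; simpl; [lra|].
  pose proof (pos_INR m). pose proof (odd_prod_pos m 0).
  replace (odd_prod m 0 * (2 * 0 + 2 * INR m + 3) * (2 * INR k + 1))
    with (odd_prod m 0 * (2 * INR k + 1) * (2 * 0 + 2 * INR m + 3)) by ring.
  apply Rmult_le_compat; nra.
Qed.

Lemma odd_prod_succ_r (m k : nat) :
  odd_prod m (S k) * (2 * INR k + 1) = odd_prod m k * (2 * INR k + 2 * INR m + 3).
Proof.
  induction m as [|m IH]; cbn [odd_prod]; rewrite ?S_INR.
  - simpl. ring.
  - transitivity (odd_prod m (S k) * (2 * INR k + 1) * (2 * INR k + 2 * INR m + 5));
      [ring|rewrite IH; ring].
Qed.

Lemma odd_prod_mul3_succ (n k : nat) :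
  odd_prod (3 * S n) k = odd_prod (3 * n) k
    * (2 * INR k + 6 * INR n + 3) * (2 * INR k + 6 * INR n + 5)
    * (2 * INR k + 6 * INR n + 7).
Proof.
  replace (3 * S n)%nat with (S (S (S (3 * n)))) by lia.
  cbn [odd_prod]. rewrite !S_INR, mult_INR. simpl INR. ring.
Qed.

Definition dpoly (y : R) : R := (2 * y + 1) * (6 * y + 1) * (6 * y + 5).

Lemma dpoly_pos (y : R) : 0 <= y -> 0 < dpoly y.
Proof. intros. unfold dpoly. repeat apply Rmult_lt_0_compat; lra. Qed.

Definition W (n k : nat) : R :=
  (2 * INR k + 3 * INR n + 1) / odd_prod (3 * n) k ^ 4.

Definition ratio (n : nat) : R :=
  - ((6 * INR n + 2) * (6 * INR n + 4) * (6 * INR n + 6)) ^ 5 / (192 * dpoly (INR n)).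

(* Found by the WZ method: [G n k / W n k] is a rational function of [n] and [k]
   whose numerator is the polynomial in [k] with coefficients [cert_coefs n]
   (constant term first). *)
Definition cert_coefs (y : R) : list R :=
  [(- 7734530979 + y * (- 215151434694 + y * (- 2739823922178 + y * (- 21225710096136 + y * (- 112111475408352 + y * (- 428632297488072 + y * (- 1228506657891984 + y * (- 2695371831823248 + y * (- 4579425793827936 + y * (- 6050172420343872 + y * (- 6199758995269824 + y * (- 4879095481209600 + y * (- 2892676048341120 + y * (- 1249679855185920 + y * (- 371201249802240 + y * (- 67765410902016 + y * (- 5730379499520)))))))))))))))));
   (- 58493430912 + y * (- 1501914911868 + y * (- 17578459776528 + y * (- 124573245103440 + y * (- 598605683676192 + y * (- 2068616461982976 + y * (- 5316983956302624 + y * (- 10361314852152768 + y * (- 15448644719829504 + y * (- 17638146162980352 + y * (- 15306222146363136 + y * (- 9921111011917056 + y * (- 4652354713199616 + y * (- 1490897812967424 + y * (- 292102421667840 + y * (- 26389132259328))))))))))))))));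
   (- 198208332980 + y * (- 4683084466032 + y * (- 50204286621216 + y * (- 324144485195904 + y * (- 1410050249049888 + y * (- 4377042912383712 + y * (- 10009554828719040 + y * (- 17147493248497920 + y * (- 22132776952244736 + y * (- 21436319006307072 + y * (- 15346778080396032 + y * (- 7880582597603328 + y * (- 2745429171784704 + y * (- 581148640935936 + y * (- 56422198149120)))))))))))))));
   (- 402021652480 + y * (- 8695194539808 + y * (- 84902046158016 + y * (- 496239086600064 + y * (- 1939519252129536 + y * (- 5358946477142016 + y * (- 10779943201390080 + y * (- 15998957701567488 + y * (- 17533104204460032 + y * (- 14023112290947072 + y * (- 7961752513198080 + y * (- 3040587977250816 + y * (- 700473318248448 + y * (- 73557828698112))))))))))))));
   (- 549594125360 + y * (- 10812360673440 + y * (- 95477177151072 + y * (- 501041113803648 + y * (- 1742292203338368 + y * (- 4233613835024640 + y * (- 7377728802264576 + y * (- 9297935997525504 + y * (- 8416730933074944 + y * (- 5340692026506240 + y * (- 2256241240212480 + y * (- 570124689592320 + y * (- 65200072919040)))))))))))));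
   (- 538083928064 + y * (- 9559700482368 + y * (- 75707217151488 + y * (- 353170643380992 + y * (- 1079355480800256 + y * (- 2271122436169728 + y * (- 3359887482461184 + y * (- 3497245003118592 + y * (- 2511627948122112 + y * (- 1186005988859904 + y * (- 331595299860480 + y * (- 41607743164416))))))))))));
   (- 389866299712 + y * (- 6204366355968 + y * (- 43637089142016 + y * (- 178781604876288 + y * (- 472883754820608 + y * (- 844373922130944 + y * (- 1031442118354944 + y * (- 851642520588288 + y * (- 455143741120512 + y * (- 142246034067456 + y * (- 19751881052160)))))))))));
   (- 212522762240 + y * (- 3001206279168 + y * (- 18527292020736 + y * (- 65665894551552 + y * (- 147346606669824 + y * (- 217198007746560 + y * (- 210438793027584 + y * (- 129296105127936 + y * (- 45735863058432 + y * (- 7099857764352))))))))));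
   (- 87602397440 + y * (- 1085506288128 + y * (- 5796173237760 + y * (- 17426489554944 + y * (- 32280771981312 + y * (- 37743223449600 + y * (- 27214237274112 + y * (- 11068759019520 + y * (- 1945183444992)))))))));
   (- 27172372480 + y * (- 291344802816 + y * (- 1320204423168 + y * (- 3278079700992 + y * (- 4818306539520 + y * (- 4193993687040 + y * (- 2002526281728 + y * (- 404791934976))))))));
   (- 6242892800 + y * (- 56886620160 + y * (- 213150597120 + y * (- 420379656192 + y * (- 460370386944 + y * (- 265539575808 + y * (- 63052038144)))))));
   (- 1030225920 + y * (- 7787126784 + y * (- 23231840256 + y * (- 34197700608 + y * (- 24848695296 + y * (- 7134511104))))));
   (- 115445760 + y * (- 699359232 + y * (- 1563992064 + y * (- 1531478016 + y * (- 554729472)))));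
   (- 7864320 + y * (- 36225024 + y * (- 54263808 + y * (- 26542080))));
   (- 245760 + y * (- 786432 + y * (- 589824)))].

Definition G (n k : nat) : R :=
  horner (cert_coefs (INR n)) (INR k)
  / (12 * dpoly (INR n) * odd_prod (3 * S n) k ^ 4).

(* [W_wz] with its denominators cleared. *)
Lemma cert_identity (y x : R) :
  let a := 2 * x + 6 * y + 3 in let b := 2 * x + 6 * y + 5 in
  let c := 2 * x + 6 * y + 7 in let e := 2 * x + 6 * y + 9 in
  16 * ((2 * x + 3 * y + 1) * 12 * dpoly y * (a * b * c * e) ^ 4
        - horner (cert_coefs y) (x + 1) * (2 * x + 1) ^ 4
        + horner (cert_coefs y) x * e ^ 4)
  + ((6 * y + 2) * (6 * y + 4) * (6 * y + 6)) ^ 5 * (2 * x + 3 * y + 4) * e ^ 4 = 0.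
Proof. intros. unfold horner, cert_coefs, dpoly, a, b, c, e. simpl fold_right. ring. Qed.

Lemma W_wz (n k : nat) : W n k - ratio n * W (S n) k = G n (S k) - G n k.
Proof.
  pose proof (pos_INR k) as Hk. pose proof (pos_INR n) as Hn.
  assert (Hshift : odd_prod (3 * S n) (S k)
                   = odd_prod (3 * S n) k * (2 * INR k + 6 * INR n + 9) / (2 * INR k + 1)).
  { apply (Rmult_eq_reg_r (2 * INR k + 1)); [|lra].
    rewrite odd_prod_succ_r, mult_INR.
    replace (INR 3) with 3 by (simpl; ring). rewrite S_INR. field. lra. }
  unfold W, G, ratio. rewrite Hshift, odd_prod_mul3_succ, !S_INR.
  pose proof (odd_prod_pos (3 * n) k) as HP. pose proof (dpoly_pos (INR n) Hn) as Hd.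
  pose proof (cert_identity (INR n) (INR k)) as Hcert. cbv zeta in Hcert.
  set (P := odd_prod (3 * n) k) in *. set (y := INR n) in *. set (x := INR k) in *.
  set (Q := horner (cert_coefs y)) in *.
  replace (Q (x + 1)) with
    ((16 * ((2 * x + 3 * y + 1) * 12 * dpoly y
            * ((2 * x + 6 * y + 3) * (2 * x + 6 * y + 5) * (2 * x + 6 * y + 7)
               * (2 * x + 6 * y + 9)) ^ 4
            + Q x * (2 * x + 6 * y + 9) ^ 4)
      + ((6 * y + 2) * (6 * y + 4) * (6 * y + 6)) ^ 5 * (2 * x + 3 * y + 4)
        * (2 * x + 6 * y + 9) ^ 4) / (16 * (2 * x + 1) ^ 4)).
  2:{ assert (H2x : 0 < 16 * (2 * x + 1) ^ 4) by (apply Rmult_lt_0_compat, pow_lt; lra).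
       apply (Rmult_eq_reg_r (16 * (2 * x + 1) ^ 4)); [|lra].
       unfold Rdiv. rewrite Rmult_assoc, Rinv_l; lra. }
  field. repeat split; lra.
Qed.

Fixpoint weight (n : nat) : R :=
  match n with
  | O => 1
  | S m => weight m * ratio m
  end.

Lemma weighted_wz (n k : nat) :
  weight n * W n k - weight (S n) * W (S n) k = weight n * G n (S k) - weight n * G n k.
Proof.
  transitivity (weight n * (W n k - ratio n * W (S n) k)); [simpl weight; ring|].
  rewrite W_wz. ring.
Qed.

Lemma W_nonneg (n k : nat) : 0 <= W n k.
Proof.
  pose proof (pos_INR k). pose proof (pos_INR n). pose proof (odd_prod_pos (3 * n) k).
  unfold W. apply Rmult_le_pos; [lra|]. left. apply Rinv_0_lt_compat, pow_lt. lra.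
Qed.

Lemma W_le (n k : nat) : W n k <= W n 0 / (2 * INR k + 1) ^ 3.
Proof.
  unfold W. change (INR 0) with 0.
  pose proof (pos_INR k) as Hk. pose proof (pos_INR n) as Hn.
  pose proof (odd_prod_pos (3 * n) 0) as HP0. pose proof (odd_prod_pos (3 * n) k) as HP.
  pose proof (odd_prod_0_le (3 * n) k) as Hle.
  set (x := INR k) in *. set (y := INR n) in *.
  set (P := odd_prod (3 * n) k) in *. set (P0 := odd_prod (3 * n) 0) in *.
  assert (H4 : (P0 * (2 * x + 1)) ^ 4 <= P ^ 4)
    by (apply pow_incr; split; [apply Rmult_le_pos|]; lra).
  assert (Hq : 0 < (P0 * (2 * x + 1)) ^ 4) by (apply pow_lt, Rmult_lt_0_compat; lra).
  apply Rle_trans with ((3 * y + 1) * (2 * x + 1) / (P0 * (2 * x + 1)) ^ 4).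
  - unfold Rdiv. apply Rmult_le_compat; [lra| |nra|apply Rinv_le_contravar; lra].
    left. apply Rinv_0_lt_compat, pow_lt. lra.
  - right. field. split; lra.
Qed.

Lemma ratio_decay_poly_le (y : R) : 0 <= y ->
  2 * ((6 * y + 2) * (6 * y + 4) * (6 * y + 6)) ^ 5 * (3 * y + 4)
  <= 192 * dpoly y * ((6 * y + 3) * (6 * y + 5) * (6 * y + 7)) ^ 4 * (3 * y + 1).
Proof.
  intros Hy.
  set (M := (6 * y + 2) * (6 * y + 4) * (6 * y + 6)).
  set (D := (6 * y + 3) * (6 * y + 5) * (6 * y + 7)).
  assert (HM : 0 <= M) by (unfold M; repeat apply Rmult_le_pos; lra).
  assert (HMD : M <= D).
  { unfold M, D. repeat apply Rmult_le_compat; try apply Rmult_le_pos; lra. }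
  assert (HM5 : M ^ 5 <= D ^ 5) by (apply pow_incr; lra).
  assert (HD4 : 0 <= D ^ 4) by (apply pow_le; lra).
  assert (HDd : D * (3 * y + 4) <= 84 * dpoly y * (3 * y + 1)).
  { unfold D, dpoly.
    assert (0 <= (2 * y + 1) * (6 * y + 5)
                 * (84 * (6 * y + 1) * (3 * y + 1) - 3 * (6 * y + 7) * (3 * y + 4)))
      by (apply Rmult_le_pos; [apply Rmult_le_pos|]; nra).
    nra. }
  apply Rle_trans with (2 * D ^ 5 * (3 * y + 4)); [apply Rmult_le_compat_r; lra|].
  replace (2 * D ^ 5 * (3 * y + 4)) with (2 * D ^ 4 * (D * (3 * y + 4))) by ring.
  pose proof (dpoly_pos y Hy).
  apply Rle_trans with (2 * D ^ 4 * (84 * dpoly y * (3 * y + 1)));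
    [apply Rmult_le_compat_l; lra|].
  assert (0 <= dpoly y * D ^ 4 * (3 * y + 1)) by (repeat apply Rmult_le_pos; lra).
  lra.
Qed.

Lemma Rabs_ratio_W_le (n : nat) : Rabs (ratio n) * W (S n) 0 <= / 2 * W n 0.
Proof.
  unfold W, ratio. rewrite odd_prod_mul3_succ, S_INR. change (INR 0) with 0.
  pose proof (pos_INR n) as Hy. pose proof (odd_prod_pos (3 * n) 0) as HP.
  pose proof (dpoly_pos _ Hy) as Hd. pose proof (ratio_decay_poly_le _ Hy) as Hpoly.
  set (y := INR n) in *. set (P0 := odd_prod (3 * n) 0) in *.
  set (M := (6 * y + 2) * (6 * y + 4) * (6 * y + 6)) in *.
  set (D := (6 * y + 3) * (6 * y + 5) * (6 * y + 7)) in *.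
  assert (HM : 0 <= M ^ 5) by (apply pow_le; unfold M; repeat apply Rmult_le_pos; lra).
  assert (HD : 0 < D) by (unfold D; repeat apply Rmult_lt_0_compat; lra).
  assert (HD4 : 0 < D ^ 4) by (apply pow_lt; lra).
  assert (HP4 : 0 < P0 ^ 4) by (apply pow_lt; lra).
  rewrite Rabs_left1.
  2:{ assert (0 < / (192 * dpoly y)) by (apply Rinv_0_lt_compat; lra).
      unfold Rdiv. nra. }
  assert (Hden : 0 < 2 * 192 * dpoly y * D ^ 4 * P0 ^ 4)
    by (repeat apply Rmult_lt_0_compat; lra).
  apply Rle_trans with (/ (2 * 192 * dpoly y * D ^ 4 * P0 ^ 4) * (2 * M ^ 5 * (3 * y + 4))).
  { right. unfold D. field. repeat split; lra. }
  apply Rle_trans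
    with (/ (2 * 192 * dpoly y * D ^ 4 * P0 ^ 4) * (192 * dpoly y * D ^ 4 * (3 * y + 1))).
  { apply Rmult_le_compat_l; [left; apply Rinv_0_lt_compat; lra|exact Hpoly]. }
  right. field. repeat split; lra.
Qed.

Lemma Rabs_weight_W_le (n : nat) : Rabs (weight n) * W n 0 <= (/ 2) ^ n.
Proof.
  induction n as [|n IH].
  - unfold W. simpl. rewrite Rabs_R1. right. field.
  - simpl weight. rewrite Rabs_mult.
    pose proof (Rabs_ratio_W_le n). pose proof (Rabs_pos (weight n)).
    apply Rle_trans with (Rabs (weight n) * (/ 2 * W n 0)).
    + rewrite Rmult_assoc. apply Rmult_le_compat_l; lra.
    + simpl pow. lra.
Qed.

Lemma Rabs_weighted_W_le (n k : nat) :
  Rabs (weight n * W n k) <= (/ 2) ^ n / (2 * INR k + 1) ^ 3.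
Proof.
  pose proof (pos_INR k). pose proof (Rabs_pos (weight n)).
  assert (Hk3 : 0 < (2 * INR k + 1) ^ 3) by (apply pow_lt; lra).
  rewrite Rabs_mult, (Rabs_right (W n k)) by (apply Rle_ge, W_nonneg).
  apply Rle_trans with (Rabs (weight n) * W n 0 / (2 * INR k + 1) ^ 3).
  - unfold Rdiv. rewrite Rmult_assoc. apply Rmult_le_compat_l; [lra|apply W_le].
  - apply Rmult_le_compat_r; [left; apply Rinv_0_lt_compat; lra|apply Rabs_weight_W_le].
Qed.

Lemma Rabs_G_le (n k : nat) :
  Rabs (G n k) <= horner (map Rabs (cert_coefs (INR n))) 1 / (12 * dpoly (INR n)) / (INR k + 1).
Proof.
  pose proof (pos_INR k) as Hk. pose proof (pos_INR n) as Hn.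
  pose proof (dpoly_pos _ Hn) as Hd.
  pose proof (Rabs_horner_le (cert_coefs (INR n)) (INR k) Hk) as Hnum.
  pose proof (horner_Rabs_1_nonneg (cert_coefs (INR n))) as HB.
  pose proof (odd_prod_ge_pow (3 * S n) k) as Hpow.
  pose proof (odd_prod_pos (3 * S n) k) as HP.
  unfold G. simpl length in Hnum.
  set (B := horner (map Rabs (cert_coefs (INR n))) 1) in *.
  set (x := INR k) in *. set (P := odd_prod (3 * S n) k) in *.
  assert (HP1 : (x + 1) ^ 4 <= P).
  { eapply Rle_trans; [|exact Hpow].
    apply Rle_trans with ((2 * x + 1) ^ 4); [apply pow_incr; lra|].
    apply Rle_pow; [lra|lia]. }
  assert (HP4 : (x + 1) ^ 16 <= P ^ 4)
    by (change 16%nat with (4 * 4)%nat; rewrite pow_mult;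
        apply pow_incr; split; [apply pow_le; lra|exact HP1]).
  assert (Hx15 : 0 < (x + 1) ^ 15) by (apply pow_lt; lra).
  assert (Hden : 0 < 12 * dpoly (INR n) * (x + 1) ^ 16)
    by (repeat apply Rmult_lt_0_compat; try apply pow_lt; lra).
  assert (HdP : 0 < 12 * dpoly (INR n) * P ^ 4) by (apply Rmult_lt_0_compat, pow_lt; lra).
  rewrite Rabs_div, (Rabs_right (12 * dpoly (INR n) * P ^ 4)) by lra.
  apply Rle_trans with (B * (x + 1) ^ 15 / (12 * dpoly (INR n) * (x + 1) ^ 16)).
  - unfold Rdiv. apply Rmult_le_compat; [apply Rabs_pos| |exact Hnum|].
    + left. apply Rinv_0_lt_compat, Rmult_lt_0_compat, pow_lt; lra.
    + apply Rinv_le_contravar; [exact Hden|]. apply Rmult_le_compat_l; lra.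
  - right. replace ((x + 1) ^ 16) with ((x + 1) ^ 15 * (x + 1)) by ring.
    field. repeat split; lra.
Qed.

Lemma weighted_G_lim (n : nat) : is_lim_seq (fun k => weight n * G n k) 0.
Proof.
  set (B := Rabs (weight n) * (horner (map Rabs (cert_coefs (INR n))) 1 / (12 * dpoly (INR n)))).
  apply (is_lim_seq_Rabs_le_0 _ (fun k => B * / (INR k + 1))).
  - intros k. unfold B. rewrite Rabs_mult, Rmult_assoc.
    apply Rmult_le_compat_l; [apply Rabs_pos|apply Rabs_G_le].
  - replace (Finite 0) with (Rbar_mult B 0) by (simpl; f_equal; ring).
    apply is_lim_seq_scal_l, is_lim_seq_inv_succ.
Qed.

Lemma horner_cert_coefs_0 (y : R) : horner (cert_coefs y) 0 = - 9 * (6 * y + 7) ^ 4 * p18 y.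
Proof. unfold horner, cert_coefs, p18. simpl fold_right. ring. Qed.

Lemma binom_6n_3n (n : nat) :
  Binomial.C (6 * n) (3 * n)
  = INR (Factorial.fact (3 * n + 3 * n)) / INR (Factorial.fact (3 * n)) ^ 2.
Proof.
  unfold Binomial.C. replace (6 * n - 3 * n)%nat with (3 * n)%nat by lia.
  replace (6 * n)%nat with (3 * n + 3 * n)%nat by lia. simpl pow. now rewrite Rmult_1_r.
Qed.

Lemma binom_6n_3n_pos (n : nat) : 0 < Binomial.C (6 * n) (3 * n).
Proof. rewrite binom_6n_3n. apply Rdiv_lt_0_compat, pow_lt; apply INR_fact_lt_0. Qed.

Lemma binom_6n_3n_succ (n : nat) :
  Binomial.C (6 * S n) (3 * S n) = Binomial.C (6 * n) (3 * n)
    * ((6 * INR n + 1) * (6 * INR n + 2) * (6 * INR n + 3)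
       * (6 * INR n + 4) * (6 * INR n + 5) * (6 * INR n + 6)
       / ((3 * INR n + 1) * (3 * INR n + 2) * (3 * INR n + 3)) ^ 2).
Proof.
  rewrite !binom_6n_3n.
  replace (3 * S n + 3 * S n)%nat with (S (S (S (S (S (S (3 * n + 3 * n))))))) by lia.
  replace (3 * S n)%nat with (S (S (S (3 * n)))) by lia.
  rewrite !fact_simpl, !mult_INR.
  pose proof (INR_fact_neq_0 (3 * n)). pose proof (pos_INR n).
  rewrite !S_INR, !plus_INR, !mult_INR. simpl INR.
  field. repeat split; try lra. apply INR_fact_neq_0.
Qed.

Lemma weight_closed_form (n : nat) :
  81 * weight n * dpoly (INR n) ^ 4 * Binomial.C (6 * n) (3 * n) ^ 5
  = (- 2 ^ 24) ^ n * (odd_prod (3 * n) 0 * (6 * INR n + 3) * (6 * INR n + 5)) ^ 4.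
Proof.
  induction n as [|n IH].
  - unfold Binomial.C, dpoly. simpl. field.
  - pose proof (pos_INR n) as Hn. pose proof (dpoly_pos _ Hn) as Hd.
    rewrite binom_6n_3n_succ, odd_prod_mul3_succ. simpl weight. rewrite S_INR.
    change (INR 0) with 0. unfold ratio.
    set (y := INR n) in *. set (C := Binomial.C (6 * n) (3 * n)) in *.
    set (P0 := odd_prod (3 * n) 0) in *.
    transitivity ((81 * weight n * dpoly y ^ 4 * C ^ 5)
                  * (- ((6 * y + 2) * (6 * y + 4) * (6 * y + 6)) ^ 5 / (192 * dpoly y)
                     * dpoly (y + 1) ^ 4 / dpoly y ^ 4
                     * ((6 * y + 1) * (6 * y + 2) * (6 * y + 3) * (6 * y + 4) * (6 * y + 5)
                        * (6 * y + 6) / ((3 * y + 1) * (3 * y + 2) * (3 * y + 3)) ^ 2) ^ 5)).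
    { field. lra. }
    rewrite IH, <- (tech_pow_Rmult (- 2 ^ 24) n). unfold dpoly in *. field. repeat split; lra.
Qed.

Lemma term18_eq (n : nat) : term18 n = 108 * - (weight n * G n 0).
Proof.
  pose proof (pos_INR n) as Hn. pose proof (binom_6n_3n_pos n) as HC.
  pose proof (odd_prod_pos (3 * n) 0) as HP. pose proof (dpoly_pos _ Hn) as Hd.
  assert (Hweight : weight n = (- 2 ^ 24) ^ n
            * (odd_prod (3 * n) 0 * (6 * INR n + 3) * (6 * INR n + 5)) ^ 4
            / (81 * dpoly (INR n) ^ 4 * Binomial.C (6 * n) (3 * n) ^ 5)).
  { rewrite <- weight_closed_form. field. split; lra. }
  unfold term18, G. change (INR 0) with 0.
  rewrite Hweight, horner_cert_coefs_0, odd_prod_mul3_succ.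
  set (y := INR n) in *. set (C := Binomial.C (6 * n) (3 * n)) in *.
  set (P0 := odd_prod (3 * n) 0) in *.
  unfold dpoly in *. change (INR 0) with 0.
  field. repeat split; lra.
Qed.

Lemma is_series_inv_odd_cube : is_series (fun k => / (2 * INR k + 1) ^ 3) (7 / 8 * zeta3).
Proof.
  replace (7 / 8) with (1 - / 2 ^ 3) by field.
  apply is_series_inv_odd_pow. lia.
Qed.

Lemma ex_series_weighted_W_majorant (n : nat) :
  ex_series (fun k => (/ 2) ^ n / (2 * INR k + 1) ^ 3).
Proof.
  exists ((/ 2) ^ n * (7 / 8 * zeta3)).
  apply (@is_series_scal_l R_AbsRing R_NormedModule), is_series_inv_odd_cube.
Qed.

Lemma ex_series_weighted_W (n : nat) : ex_series (fun k => weight n * W n k).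
Proof.
  apply (ex_series_Rabs_le _ _ (Rabs_weighted_W_le n)), ex_series_weighted_W_majorant.
Qed.

Lemma Series_weighted_W_lim : is_lim_seq (fun n => Series (fun k => weight n * W n k)) 0.
Proof.
  apply (is_lim_seq_Rabs_le_0 _ (fun n => (/ 2) ^ n * (7 / 8 * zeta3))).
  - intros n. rewrite <- (is_series_unique _ _ is_series_inv_odd_cube), <- Series_scal_l.
    apply Rabs_Series_le; [apply Rabs_weighted_W_le|apply ex_series_weighted_W_majorant].
  - replace (Finite 0) with (Rbar_mult 0 (7 / 8 * zeta3)) by (simpl; f_equal; ring).
    apply is_lim_seq_scal_r, is_lim_seq_geom. rewrite Rabs_right; lra.
Qed.

Lemma Series_weighted_W_0 : Series (fun k => weight 0 * W 0 k) = 7 / 8 * zeta3.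
Proof.
  rewrite <- (is_series_unique _ _ is_series_inv_odd_cube). apply Series_ext. intros k.
  unfold W. simpl. field. pose proof (pos_INR k). lra.
Qed.

Theorem mainTheorem18 : is_series term18 (189 / 2 * zeta3).
Proof.
  pose proof (is_series_wz (fun n k => weight n * W n k) (fun n k => weight n * G n k)
                weighted_wz ex_series_weighted_W weighted_G_lim Series_weighted_W_lim) as Hwz.
  cbv beta in Hwz. rewrite Series_weighted_W_0 in Hwz.
  replace (189 / 2 * zeta3) with (108 * (7 / 8 * zeta3)) by field.
  apply (is_series_ext _ _ _ (fun n => eq_sym (term18_eq n))).
  apply (@is_series_scal_l R_AbsRing R_NormedModule), Hwz.
Qed.
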